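(* Let $\alpha\in(0,1]$, $F\in C^{1,\alpha}_{\mathsf h}(\mathbb H,\mathbb R^2)$ and $p\in\mathbb H$ nondegenerate for $F$. Then there exists $\varepsilon_1>0$ such that whenever $x,y\in B(p,\varepsilon_1)$ satisfy $F(x)=F(y)$ and $[x^{-1}y]^{\mathsf v}\le[x^{-1}y]^{\mathsf h}$, we have $x=y$. In particular this holds if $(x^{-1}y)^{\mathsf v}=0$.
   Context: The Heisenberg group $\mathbb H$ is $\mathbb R^3$ with product $(x^1,x^2,x^3)(y^1,y^2,y^3)=(x^1+y^1,x^2+y^2,x^3+y^3+x^1y^2-x^2y^1)$, inverse $x^{-1}=-x$. For $x\in\mathbb H$: $x^{\mathsf h}=(x^1,x^2)$, $x^{\mathsf v}=x^3$, $[x]^{\mathsf h}=|x^{\mathsf h}|$, $[x]^{\mathsf v}=\sqrt{|x^3|}$. $\mathsf d$ is a fixed distance on $\mathbb H$, left-invariant and $1$-homogeneous w.r.t. dilations $\delta_r(x)=(rx^1,rx^2,r^2x^3)$; $B(x,r)$ is the open $\mathsf d$-ball. $X_1=\partial_1-x^2\partial_3$, $X_2=\partial_2+x^1\partial_3$. $C^{1,\alpha}_{\mathsf h}(\mathbb H,\mathbb R^2)$: maps $F$ with $X_1F,X_2F$ existing everywhere and $\nabla_{\mathsf h}F=[X_1F,X_2F]$ $\alpha$-Hölder w.r.t. $\mathsf d$ on bounded sets. $p$ is nondegenerate for $F$ if $\nabla_{\mathsf h}F(p)$ is invertible. *)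

From Stdlib Require Import Reals.
Open Scope R_scope.

Definition H : Type := (R * R * R)%type.

Definition h1 (x : H) : R := fst (fst x).
Definition h2 (x : H) : R := snd (fst x).
Definition h3 (x : H) : R := snd x.

Definition Hmul (x y : H) : H :=
  (h1 x + h1 y, h2 x + h2 y, h3 x + h3 y + h1 x * h2 y - h2 x * h1 y).
Definition Hinv (x : H) : H := (- h1 x, - h2 x, - h3 x).
Definition H0 : H := (0, 0, 0).

Definition dil (r : R) (x : H) : H := (r * h1 x, r * h2 x, r * r * h3 x).

Definition hnorm (x : H) : R := sqrt (h1 x * h1 x + h2 x * h2 x).
Definition vnorm (x : H) : R := sqrt (Rabs (h3 x)).

Definition is_distance (d : H -> H -> R) : Prop :=
  (forall x y, 0 <= d x y) /\
  (forall x y, d x y = 0 <-> x = y) /\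
  (forall x y, d x y = d y x) /\
  (forall x y z, d x z <= d x y + d y z).

Definition left_invariant (d : H -> H -> R) : Prop :=
  forall z x y, d (Hmul z x) (Hmul z y) = d x y.

Definition homogeneous (d : H -> H -> R) : Prop :=
  forall r x y, 0 < r -> d (dil r x) (dil r y) = r * d x y.

Definition homogeneous_distance (d : H -> H -> R) : Prop :=
  is_distance d /\ left_invariant d /\ homogeneous d.

Definition ball (d : H -> H -> R) (x : H) (r : R) (y : H) : Prop := d x y < r.

(* Left-invariant horizontal vector fields:
   X1 f (x) = d/dt f(x . (t,0,0)) at t = 0 = (d_1 - x2 d_3) f (x)
   X2 f (x) = d/dt f(x . (0,t,0)) at t = 0 = (d_2 + x1 d_3) f (x) *)
Definition is_X1_deriv (f : H -> R) (x : H) (l : R) : Prop :=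
  derivable_pt_lim (fun t => f (h1 x + t, h2 x, h3 x - h2 x * t)) 0 l.
Definition is_X2_deriv (f : H -> R) (x : H) (l : R) : Prop :=
  derivable_pt_lim (fun t => f (h1 x, h2 x + t, h3 x + h1 x * t)) 0 l.

(* F = (F1, F2) : H -> R^2 ;  G x = nabla_h F (x) = [X1 F, X2 F], given
   entrywise: G x = ((X1 F1, X2 F1), (X1 F2, X2 F2)). *)
Definition Mat2 : Type := ((R * R) * (R * R))%type.

Definition is_horiz_grad (F : H -> R * R) (G : H -> Mat2) : Prop :=
  forall x,
    is_X1_deriv (fun z => fst (F z)) x (fst (fst (G x))) /\
    is_X2_deriv (fun z => fst (F z)) x (snd (fst (G x))) /\
    is_X1_deriv (fun z => snd (F z)) x (fst (snd (G x))) /\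
    is_X2_deriv (fun z => snd (F z)) x (snd (snd (G x))).

Definition mat_dist (A B : Mat2) : R :=
  Rmax (Rmax (Rabs (fst (fst A) - fst (fst B))) (Rabs (snd (fst A) - snd (fst B))))
       (Rmax (Rabs (fst (snd A) - fst (snd B))) (Rabs (snd (snd A) - snd (snd B)))).

Definition holder_on_bounded (d : H -> H -> R) (alpha : R) (G : H -> Mat2) : Prop :=
  forall Rb, 0 < Rb -> exists C, 0 <= C /\
    forall x y, d H0 x < Rb -> d H0 y < Rb ->
      mat_dist (G x) (G y) <= C * Rpower (d x y) alpha.

Definition C1alpha_h_with_grad (d : H -> H -> R) (alpha : R)
  (F : H -> R * R) (G : H -> Mat2) : Prop :=
  is_horiz_grad F G /\ holder_on_bounded d alpha G.

Definition mat_det (A : Mat2) : R :=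
  fst (fst A) * snd (snd A) - snd (fst A) * fst (snd A).

Definition nondegenerate (G : H -> Mat2) (p : H) : Prop := mat_det (G p) <> 0.

(* Write z = x^-1 y = (a, b, c).  When [z]^v <= [z]^h, y is reached from x by a
   horizontal path: the step (a, b) followed by the commutator of two horizontal
   steps (s, r) with 2 s r = c - a b, so |s| + |r| <= 2 (|a| + |b|).  Along each
   step F varies, by the mean value theorem, like its horizontal gradient, which
   by Hoelder continuity stays close to the invertible matrix nabla_h F(p); the
   commutator contributes no linear term.  Hence
   F(y) - F(x) = nabla_h F(p) (a, b) up to an error eta (|a| + |b|) with eta
   small, and F(x) = F(y) forces a = b = 0, hence c = 0.  The path stays near p because |a| + |b| <= C d(x, y),
   which follows for any homogeneous distance from the quadratic scaling of the
   centre, where commutators live. *)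

From Stdlib Require Import Reals Lra Psatz.
Open Scope R_scope.

Definition expX (t : R) : H := (t, 0, 0).
Definition expY (t : R) : H := (0, t, 0).
Definition hstep (w : H) (t u : R) : H := Hmul (Hmul w (expX t)) (expY u).

Ltac heis_ring :=
  unfold hstep, Hmul, Hinv, dil, H0, expX, expY, h1, h2, h3; simpl;
  apply (f_equal2 pair); [apply (f_equal2 pair)|]; ring.

Section Distance.

Variable d : H -> H -> R.
Hypothesis HD : homogeneous_distance d.

Let d_nonneg x y : 0 <= d x y.
Proof. apply HD. Qed.

Let d_triangle x y z : d x z <= d x y + d y z.
Proof. apply HD. Qed.

Let d_eq0 x y : d x y = 0 <-> x = y.
Proof. apply HD. Qed.

Lemma dist_translate w v : d w (Hmul w v) = d H0 v.
Proof.
  destruct HD as [_ [Hl _]]. rewrite <- (Hl w H0 v). f_equal.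
  destruct w as [[? ?] ?]; heis_ring.
Qed.

Lemma norm_inv v : d H0 (Hinv v) = d H0 v.
Proof.
  rewrite <- (dist_translate v (Hinv v)).
  replace (Hmul v (Hinv v)) with H0 by (destruct v as [[? ?] ?]; heis_ring).
  apply HD.
Qed.

Lemma norm_dil r v : 0 < r -> d H0 (dil r v) = r * d H0 v.
Proof.
  intro Hr. destruct HD as [_ [_ Hh]]. rewrite <- (Hh r H0 v Hr). f_equal. heis_ring.
Qed.

Lemma norm_dil_horizontal t v : h3 v = 0 -> d H0 (dil t v) = Rabs t * d H0 v.
Proof.
  destruct v as [[v1 v2] v3]; unfold h3; simpl; intros ->.
  destruct (Rtotal_order t 0) as [Ht|[->|Ht]].
  - replace (dil t _) with (Hinv (dil (- t) (v1, v2, 0))) by heis_ring.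
    rewrite norm_inv, norm_dil, Rabs_left by lra. reflexivity.
  - replace (dil 0 _) with H0 by heis_ring.
    rewrite Rabs_R0, Rmult_0_l. apply d_eq0. reflexivity.
  - rewrite norm_dil, Rabs_right by lra. reflexivity.
Qed.

Lemma norm_expX t : d H0 (expX t) = Rabs t * d H0 (expX 1).
Proof.
  rewrite <- norm_dil_horizontal by reflexivity. f_equal. heis_ring.
Qed.

Lemma norm_expY t : d H0 (expY t) = Rabs t * d H0 (expY 1).
Proof.
  rewrite <- norm_dil_horizontal by reflexivity. f_equal. heis_ring.
Qed.

Lemma norm_vertical c : d H0 (0, 0, c) = sqrt (Rabs c) * d H0 (0, 0, 1).
Proof.
  assert (Habs : d H0 (0, 0, c) = d H0 (0, 0, Rabs c)).
  { unfold Rabs; destruct (Rcase_abs c); [|reflexivity].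
    rewrite <- norm_inv. f_equal. heis_ring. }
  rewrite Habs. destruct (Req_dec c 0) as [->|Hc].
  - rewrite Rabs_R0, sqrt_0, Rmult_0_l. apply d_eq0. reflexivity.
  - pose proof (Rabs_pos_lt c Hc).
    rewrite <- norm_dil by (apply sqrt_lt_R0; lra). f_equal.
    unfold dil, h1, h2, h3; simpl. rewrite Rmult_1_r, sqrt_sqrt by lra.
    apply (f_equal2 pair); [apply (f_equal2 pair)|]; ring.
Qed.

Lemma norm_commutator_le z u :
  d H0 (Hmul (Hmul (Hmul z u) (Hinv z)) (Hinv u)) <= 2 * d H0 z + 2 * d H0 u.
Proof.
  pose proof (d_triangle H0 z (Hmul z u)) as T1.
  pose proof (d_triangle H0 (Hmul z u) (Hmul (Hmul z u) (Hinv z))) as T2.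
  pose proof (d_triangle H0 (Hmul (Hmul z u) (Hinv z))
                (Hmul (Hmul (Hmul z u) (Hinv z)) (Hinv u))) as T3.
  rewrite !dist_translate, !norm_inv in *. lra.
Qed.

(* The commutator of z with the horizontal element (d H0 z) e is vertical, of
   height proportional to the cross product z^h x e^h; homogeneity in the
   centre is quadratic, so its norm controls that cross product linearly. *)
Lemma cross_le_norm z e1 e2 :
  Rabs (h1 z * e2 - h2 z * e1) * d H0 (0, 0, 1) ^ 2
  <= 2 * (1 + d H0 (e1, e2, 0)) ^ 2 * d H0 z.
Proof.
  set (D := d H0 z). set (w := h1 z * e2 - h2 z * e1). set (e := (e1, e2, 0)).
  assert (0 <= (1 + d H0 e) ^ 2) by apply pow2_ge_0.
  destruct (Req_dec D 0) as [D0|D0].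
  { apply d_eq0 in D0. subst z. unfold w. change (h1 H0) with 0. change (h2 H0) with 0.
    replace (0 * _ - 0 * _) with 0 by ring. rewrite Rabs_R0, Rmult_0_l.
    apply Rmult_le_pos; [lra | apply d_nonneg]. }
  assert (Dpos : 0 < D) by (pose proof (d_nonneg H0 z); unfold D in *; lra).
  pose proof (norm_commutator_le z (dil D e)) as Hc.
  replace (Hmul _ (Hinv (dil D e))) with (0, 0, 2 * D * w) in Hc
    by (destruct z as [[? ?] ?]; unfold w; heis_ring).
  rewrite norm_vertical, norm_dil_horizontal, (Rabs_right D) in Hc
    by (reflexivity || lra).
  fold D in Hc. set (V := d H0 (0, 0, 1)) in *. set (k := d H0 e) in *.
  assert (0 <= V) by apply d_nonneg. assert (0 <= k) by apply d_nonneg.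
  assert (Hw : Rabs (2 * D * w) = 2 * D * Rabs w).
  { rewrite !Rabs_mult, (Rabs_right 2), (Rabs_right D); lra. }
  rewrite Hw in Hc. set (q := sqrt (2 * D * Rabs w)) in Hc.
  assert (Hq : q * q = 2 * D * Rabs w).
  { apply sqrt_sqrt. pose proof (Rabs_pos w). nra. }
  assert (0 <= q) by apply sqrt_pos.
  assert (Hsq : (q * V) * (q * V) <= (2 * D * (1 + k)) * (2 * D * (1 + k)))
    by (apply Rmult_le_compat; nra).
  apply (Rmult_le_reg_l (2 * D)); [lra|].
  replace (2 * D * (Rabs w * V ^ 2)) with ((q * q) * (V * V)) by (rewrite Hq; ring).
  nra.
Qed.

Lemma horizontal_le_norm :
  exists C, 0 <= C /\ forall z, Rabs (h1 z) + Rabs (h2 z) <= C * d H0 z.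
Proof.
  set (V := d H0 (0, 0, 1)).
  assert (Vpos : 0 < V).
  { destruct (d_nonneg H0 (0, 0, 1)) as [|E]; [assumption|].
    symmetry in E. apply d_eq0 in E. injection E. lra. }
  set (kX := d H0 (1, 0, 0)). set (kY := d H0 (0, 1, 0)).
  pose proof (pow2_ge_0 (1 + kY)) as kY2. pose proof (pow2_ge_0 (1 + kX)) as kX2.
  exists (2 * ((1 + kY) ^ 2 + (1 + kX) ^ 2) / V ^ 2). split.
  { apply Rmult_le_pos; [lra|]. apply Rlt_le, Rinv_0_lt_compat, pow_lt, Vpos. }
  intro z.
  pose proof (cross_le_norm z 0 1) as HcY. pose proof (cross_le_norm z 1 0) as HcX.
  fold V kX kY in HcX, HcY.
  replace (h1 z * 1 - h2 z * 0) with (h1 z) in HcY by ring.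
  replace (h1 z * 0 - h2 z * 1) with (- h2 z) in HcX by ring.
  rewrite Rabs_Ropp in HcX.
  apply (Rmult_le_reg_r (V ^ 2)); [apply pow_lt, Vpos|].
  replace (2 * ((1 + kY) ^ 2 + (1 + kX) ^ 2) / V ^ 2 * d H0 z * V ^ 2)
    with (2 * (1 + kY) ^ 2 * d H0 z + 2 * (1 + kX) ^ 2 * d H0 z)
    by (field; lra).
  lra.
Qed.

Lemma dist_mul_expX p w t : d p (Hmul w (expX t)) <= d p w + Rabs t * d H0 (expX 1).
Proof. rewrite <- norm_expX, <- (dist_translate w). apply d_triangle. Qed.

Lemma dist_mul_expY p w t : d p (Hmul w (expY t)) <= d p w + Rabs t * d H0 (expY 1).
Proof. rewrite <- norm_expY, <- (dist_translate w). apply d_triangle. Qed.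

End Distance.

Lemma derivable_pt_lim_shift (phi psi : R -> R) c l :
  (forall h, phi (c + h) = psi h) -> derivable_pt_lim psi 0 l ->
  derivable_pt_lim phi c l.
Proof.
  intros E Hpsi eps Heps. destruct (Hpsi eps Heps) as [del Hdel]. exists del.
  intros h Hh Hhdel. rewrite E.
  replace (phi c) with (psi 0) by (rewrite <- E, Rplus_0_r; reflexivity).
  specialize (Hdel h Hh Hhdel). rewrite Rplus_0_l in Hdel. exact Hdel.
Qed.

Lemma MVT_increment_le (phi phi' : R -> R) t P eta :
  (forall c, derivable_pt_lim phi c (phi' c)) ->
  (forall th, Rabs th <= Rabs t -> Rabs (phi' th - P) <= eta) ->
  Rabs (phi t - phi 0 - t * P) <= Rabs t * eta.
Proof.
  intros Hphi Hb. destruct (Rtotal_order t 0) as [Ht|[->|Ht]].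
  - destruct (MVT_cor2 phi phi' t 0 Ht (fun c _ => Hphi c)) as [c [E Hc]].
    replace (phi t - phi 0 - t * P) with ((phi' c - P) * t) by lra.
    rewrite Rabs_mult, Rmult_comm. apply Rmult_le_compat_l; [apply Rabs_pos|].
    apply Hb. rewrite !Rabs_left by lra. lra.
  - replace (phi 0 - phi 0 - 0 * P) with 0 by ring. rewrite Rabs_R0. lra.
  - destruct (MVT_cor2 phi phi' 0 t Ht (fun c _ => Hphi c)) as [c [E Hc]].
    replace (phi t - phi 0 - t * P) with ((phi' c - P) * t) by lra.
    rewrite Rabs_mult, Rmult_comm. apply Rmult_le_compat_l; [apply Rabs_pos|].
    apply Hb. rewrite !Rabs_right by lra. lra.
Qed.

Lemma X1_increment_le (f g : H -> R) w t P eta :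
  (forall q, is_X1_deriv f q (g q)) ->
  (forall th, Rabs th <= Rabs t -> Rabs (g (Hmul w (expX th)) - P) <= eta) ->
  Rabs (f (Hmul w (expX t)) - f w - t * P) <= Rabs t * eta.
Proof.
  intros Hg Hb.
  replace (f w) with (f (Hmul w (expX 0))) by (f_equal; destruct w as [[? ?] ?]; heis_ring).
  apply (MVT_increment_le (fun u => f (Hmul w (expX u))) (fun u => g (Hmul w (expX u)))); [|exact Hb].
  intro c. eapply derivable_pt_lim_shift; [|apply (Hg (Hmul w (expX c)))].
  intro h. simpl. f_equal. destruct w as [[? ?] ?]; heis_ring.
Qed.

Lemma X2_increment_le (f g : H -> R) w t P eta :
  (forall q, is_X2_deriv f q (g q)) ->
  (forall th, Rabs th <= Rabs t -> Rabs (g (Hmul w (expY th)) - P) <= eta) ->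
  Rabs (f (Hmul w (expY t)) - f w - t * P) <= Rabs t * eta.
Proof.
  intros Hg Hb.
  replace (f w) with (f (Hmul w (expY 0))) by (f_equal; destruct w as [[? ?] ?]; heis_ring).
  apply (MVT_increment_le (fun u => f (Hmul w (expY u))) (fun u => g (Hmul w (expY u)))); [|exact Hb].
  intro c. eapply derivable_pt_lim_shift; [|apply (Hg (Hmul w (expY c)))].
  intro h. simpl. f_equal. destruct w as [[? ?] ?]; heis_ring.
Qed.

Lemma hstep_commutator w a b s r :
  hstep (hstep (hstep w a b) s r) (- s) (- r) = Hmul w (a, b, a * b + 2 * s * r).
Proof. destruct w as [[? ?] ?]; heis_ring. Qed.

Section Increments.

Variables (d : H -> H -> R) (p : H) (f g1 g2 : H -> R) (del eta P1 P2 : R).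
Hypothesis HD : homogeneous_distance d.
Hypothesis Hg1 : forall q, is_X1_deriv f q (g1 q).
Hypothesis Hg2 : forall q, is_X2_deriv f q (g2 q).
Hypothesis Hclose1 : forall q, d p q < del -> Rabs (g1 q - P1) <= eta.
Hypothesis Hclose2 : forall q, d p q < del -> Rabs (g2 q - P2) <= eta.

Let K := d H0 (expX 1) + d H0 (expY 1).

Let kX_nonneg : 0 <= d H0 (expX 1).
Proof. apply HD. Qed.

Let kY_nonneg : 0 <= d H0 (expY 1).
Proof. apply HD. Qed.

Lemma dist_hstep w t u : d p (hstep w t u) <= d p w + (Rabs t + Rabs u) * K.
Proof.
  pose proof (dist_mul_expX d HD p w t) as Tx.
  pose proof (dist_mul_expY d HD p (Hmul w (expX t)) u) as Ty.
  pose proof (Rmult_le_pos _ _ (Rabs_pos t) kY_nonneg).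
  pose proof (Rmult_le_pos _ _ (Rabs_pos u) kX_nonneg).
  unfold hstep, K. lra.
Qed.

Lemma hstep_increment_le w t u :
  d p w + (Rabs t + Rabs u) * K < del ->
  Rabs (f (hstep w t u) - f w - (t * P1 + u * P2)) <= (Rabs t + Rabs u) * eta.
Proof.
  intro Hw. unfold K in Hw.
  pose proof (Rmult_le_pos _ _ (Rabs_pos t) kY_nonneg).
  pose proof (Rmult_le_pos _ _ (Rabs_pos u) kX_nonneg).
  pose proof (Rmult_le_pos _ _ (Rabs_pos u) kY_nonneg).
  pose proof (dist_mul_expX d HD p w t) as Tx.
  assert (IX : Rabs (f (Hmul w (expX t)) - f w - t * P1) <= Rabs t * eta).
  { apply X1_increment_le with g1; [exact Hg1|]. intros th Hth. apply Hclose1.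
    pose proof (dist_mul_expX d HD p w th).
    pose proof (Rmult_le_compat_r _ _ _ kX_nonneg Hth). lra. }
  assert (IY : Rabs (f (hstep w t u) - f (Hmul w (expX t)) - u * P2) <= Rabs u * eta).
  { apply X2_increment_le with g2; [exact Hg2|]. intros th Hth. apply Hclose2.
    pose proof (dist_mul_expY d HD p (Hmul w (expX t)) th).
    pose proof (Rmult_le_compat_r _ _ _ kY_nonneg Hth). lra. }
  replace (f (hstep w t u) - f w - (t * P1 + u * P2))
    with ((f (Hmul w (expX t)) - f w - t * P1)
          + (f (hstep w t u) - f (Hmul w (expX t)) - u * P2)) by ring.
  eapply Rle_trans; [apply Rabs_triang|]. lra.
Qed.

Lemma commutator_path_increment_le w a b s r :
  d p w + (Rabs a + Rabs b + 2 * (Rabs s + Rabs r)) * K < del ->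
  Rabs (f (Hmul w (a, b, a * b + 2 * s * r)) - f w - (a * P1 + b * P2))
  <= (Rabs a + Rabs b + 2 * (Rabs s + Rabs r)) * eta.
Proof.
  intro Hw. rewrite <- hstep_commutator.
  set (w1 := hstep w a b). set (w2 := hstep w1 s r).
  assert (Ksr : 0 <= (Rabs s + Rabs r) * K).
  { apply Rmult_le_pos; unfold K.
    - pose proof (Rabs_pos s); pose proof (Rabs_pos r); lra.
    - lra. }
  pose proof (dist_hstep w a b) as D1. pose proof (dist_hstep w1 s r) as D2.
  fold w1 in D1. fold w2 in D2.
  assert (I1 := hstep_increment_le w a b ltac:(lra)).
  assert (I2 := hstep_increment_le w1 s r ltac:(lra)).
  assert (I3 := hstep_increment_le w2 (- s) (- r) ltac:(rewrite !Rabs_Ropp; lra)).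
  rewrite !Rabs_Ropp in I3. fold w1 w2 in I1, I2.
  replace (f (hstep w2 (- s) (- r)) - f w - (a * P1 + b * P2))
    with ((f w1 - f w - (a * P1 + b * P2)) + (f w2 - f w1 - (s * P1 + r * P2))
          + (f (hstep w2 (- s) (- r)) - f w2 - (- s * P1 + - r * P2))) by ring.
  eapply Rle_trans; [apply Rabs_triang|].
  eapply Rle_trans; [apply Rplus_le_compat_r, Rabs_triang|]. lra.
Qed.

End Increments.

Lemma mat_dist_entries_le (A B : Mat2) eta : mat_dist A B <= eta ->
  Rabs (fst (fst B) - fst (fst A)) <= eta /\ Rabs (snd (fst B) - snd (fst A)) <= eta /\
  Rabs (fst (snd B) - fst (snd A)) <= eta /\ Rabs (snd (snd B) - snd (snd A)) <= eta.
Proof.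
  unfold mat_dist. intro HAB.
  rewrite (Rabs_minus_sym (fst (fst B))), (Rabs_minus_sym (snd (fst B))),
    (Rabs_minus_sym (fst (snd B))), (Rabs_minus_sym (snd (snd B))).
  pose proof (Rle_trans _ _ _ (Rmax_l _ _) HAB) as H1.
  pose proof (Rle_trans _ _ _ (Rmax_r _ _) HAB) as H2.
  repeat split; eapply Rle_trans; [| exact H1 | | exact H1 | | exact H2 | | exact H2];
    apply Rmax_l || apply Rmax_r.
Qed.

Lemma Rabs_le_0 x : Rabs x <= 0 -> x = 0.
Proof.
  intro Hx. destruct (Req_dec x 0) as [|Hx0]; [assumption|].
  pose proof (Rabs_pos_lt x Hx0). lra.
Qed.

Definition mat_l1 (A : Mat2) : R :=
  Rabs (fst (fst A)) + Rabs (snd (fst A)) + Rabs (fst (snd A)) + Rabs (snd (snd A)).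

Lemma det_mul_l1_le (A : Mat2) a b E :
  Rabs (fst (fst A) * a + snd (fst A) * b) <= E ->
  Rabs (fst (snd A) * a + snd (snd A) * b) <= E ->
  Rabs (mat_det A) * (Rabs a + Rabs b) <= mat_l1 A * E.
Proof.
  destruct A as [[A11 A12] [A21 A22]]; unfold mat_det, mat_l1; simpl.
  set (u := A11 * a + A12 * b). set (v := A21 * a + A22 * b). intros Hu Hv.
  (* Cramer's rule *)
  assert (Ea : (A11 * A22 - A12 * A21) * a = A22 * u - A12 * v) by (unfold u, v; ring).
  assert (Eb : (A11 * A22 - A12 * A21) * b = A11 * v - A21 * u) by (unfold u, v; ring).
  assert (Ba : Rabs (A22 * u - A12 * v) <= (Rabs A22 + Rabs A12) * E).
  { unfold Rminus. eapply Rle_trans; [apply Rabs_triang|].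
    rewrite Rabs_Ropp, !Rabs_mult.
    pose proof (Rmult_le_compat_l _ _ _ (Rabs_pos A22) Hu).
    pose proof (Rmult_le_compat_l _ _ _ (Rabs_pos A12) Hv). lra. }
  assert (Bb : Rabs (A11 * v - A21 * u) <= (Rabs A11 + Rabs A21) * E).
  { unfold Rminus. eapply Rle_trans; [apply Rabs_triang|].
    rewrite Rabs_Ropp, !Rabs_mult.
    pose proof (Rmult_le_compat_l _ _ _ (Rabs_pos A11) Hv).
    pose proof (Rmult_le_compat_l _ _ _ (Rabs_pos A21) Hu). lra. }
  rewrite <- Ea, Rabs_mult in Ba. rewrite <- Eb, Rabs_mult in Bb. lra.
Qed.

Lemma holder_continuous_at d alpha (G : H -> Mat2) p :
  is_distance d -> 0 < alpha -> holder_on_bounded d alpha G ->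
  forall eta, 0 < eta ->
  exists del, 0 < del /\ forall q, d p q < del -> mat_dist (G p) (G q) <= eta.
Proof.
  intros [Hnn [Hz [_ Htr]]] Ha Hhol eta Heta.
  destruct (Hhol (d H0 p + 1)) as [C [C0 HC]]; [pose proof (Hnn H0 p) as Hp; lra|].
  set (t := eta / (C + 1)).
  assert (tpos : 0 < t) by (apply Rdiv_lt_0_compat; lra).
  set (rho := Rpower t (/ alpha)).
  assert (rhopos : 0 < rho) by apply exp_pos.
  exists (Rmin 1 rho). split; [apply Rmin_glb_lt; lra|].
  intros q Hq. pose proof (Rmin_l 1 rho) as Hq1. pose proof (Rmin_r 1 rho) as Hq2.
  destruct (Req_dec (d p q) 0) as [E|E].
  { apply Hz in E. subst q. unfold mat_dist. rewrite !Rminus_diag, Rabs_R0, !Rmax_left; lra. }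
  assert (Hpq : 0 < d p q) by (pose proof (Hnn p q) as Hn; lra).
  assert (Hpow : Rpower (d p q) alpha < t).
  { replace t with (Rpower rho alpha)
      by (unfold rho; rewrite Rpower_mult, Rinv_l, Rpower_1; lra).
    apply Rlt_Rpower_l; lra. }
  eapply Rle_trans; [apply HC; [lra | pose proof (Htr H0 p q) as T; lra]|].
  apply Rle_trans with (C * t); [apply Rmult_le_compat_l; lra|].
  unfold t. apply (Rmult_le_reg_r (C + 1)); [lra|].
  replace (C * (eta / (C + 1)) * (C + 1)) with (C * eta) by (field; lra). nra.
Qed.

Lemma vnorm_le_hnorm_height z :
  vnorm z <= hnorm z -> Rabs (h3 z) <= h1 z * h1 z + h2 z * h2 z.
Proof.
  unfold vnorm, hnorm. intro Hv.
  apply sqrt_le_0 in Hv; [assumption | apply Rabs_pos | nra].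
Qed.

Lemma horizontal_decomposition z : vnorm z <= hnorm z ->
  exists s r, z = (h1 z, h2 z, h1 z * h2 z + 2 * s * r) /\
    Rabs s + Rabs r <= 2 * (Rabs (h1 z) + Rabs (h2 z)).
Proof.
  intro Hv. apply vnorm_le_hnorm_height in Hv.
  destruct z as [[a b] c]; unfold h1, h2, h3 in *; simpl in *.
  set (e := c - a * b). set (s := sqrt (Rabs e / 2)).
  assert (Hs : s * s = Rabs e / 2) by (apply sqrt_sqrt; pose proof (Rabs_pos e); lra).
  assert (s0 : 0 <= s) by apply sqrt_pos.
  exists s, (if Rle_dec 0 e then s else - s). split.
  - f_equal. destruct (Rle_dec 0 e) as [He|He];
      [rewrite Rabs_right in Hs | rewrite Rabs_left in Hs]; unfold e in *; lra.
  - assert (Hr : Rabs (if Rle_dec 0 e then s else - s) = s).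
    { destruct (Rle_dec 0 e); [|rewrite Rabs_Ropp]; apply Rabs_right; lra. }
    rewrite Hr, (Rabs_right s) by lra.
    assert (He : Rabs e <= Rabs c + Rabs a * Rabs b).
    { unfold e. rewrite <- Rabs_mult, <- (Rabs_Ropp (a * b)). apply Rabs_triang. }
    pose proof (Rabs_pos a) as Aa. pose proof (Rabs_pos b) as Ab.
    rewrite <- (Rabs_right (a * a)), <- (Rabs_right (b * b)), !Rabs_mult in Hv by nra.
    destruct (Rle_lt_dec s (Rabs a + Rabs b)); [lra | nra].
Qed.

(* The factor 5 absorbs the path length |a| + |b| + 2 (|s| + |r|) <= 5 (|a| + |b|). *)
Definition grad_tolerance (A : Mat2) : R := Rabs (mat_det A) / (5 * (mat_l1 A + 1)).

Lemma mat_l1_nonneg A : 0 <= mat_l1 A.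
Proof.
  unfold mat_l1. pose proof (Rabs_pos (fst (fst A))). pose proof (Rabs_pos (snd (fst A))).
  pose proof (Rabs_pos (fst (snd A))). pose proof (Rabs_pos (snd (snd A))). lra.
Qed.

Lemma grad_tolerance_pos A : mat_det A <> 0 -> 0 < grad_tolerance A.
Proof.
  intro HA. pose proof (mat_l1_nonneg A). apply Rdiv_lt_0_compat; [apply Rabs_pos_lt|]; lra.
Qed.

Lemma mat_l1_grad_tolerance_lt A : mat_det A <> 0 ->
  5 * mat_l1 A * grad_tolerance A < Rabs (mat_det A).
Proof.
  intro HA. pose proof (mat_l1_nonneg A). pose proof (Rabs_pos_lt _ HA).
  unfold grad_tolerance. apply (Rmult_lt_reg_r (mat_l1 A + 1)); [lra|].
  replace (5 * mat_l1 A * (Rabs (mat_det A) / (5 * (mat_l1 A + 1))) * (mat_l1 A + 1))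
    with (mat_l1 A * Rabs (mat_det A)) by (field; lra).
  nra.
Qed.

Section Nondegenerate.

Variables (d : H -> H -> R) (F : H -> R * R) (G : H -> Mat2) (p : H) (del : R).
Hypothesis HD : homogeneous_distance d.
Hypothesis Hgrad : is_horiz_grad F G.
Hypothesis Hnd : nondegenerate G p.
Hypothesis Hclose : forall q, d p q < del -> mat_dist (G p) (G q) <= grad_tolerance (G p).

Let K := d H0 (expX 1) + d H0 (expY 1).

Lemma grad_apply_le_path_length x a b s r :
  let L := Rabs a + Rabs b + 2 * (Rabs s + Rabs r) in
  d p x + L * K < del -> F (Hmul x (a, b, a * b + 2 * s * r)) = F x ->
  Rabs (fst (fst (G p)) * a + snd (fst (G p)) * b) <= L * grad_tolerance (G p) /\
  Rabs (fst (snd (G p)) * a + snd (snd (G p)) * b) <= L * grad_tolerance (G p).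
Proof.
  intros L Hx HF.
  pose proof (fun q Hq => mat_dist_entries_le _ _ _ (Hclose q Hq)) as Hentries.
  pose proof (commutator_path_increment_le d p (fun q => fst (F q))
    (fun q => fst (fst (G q))) (fun q => snd (fst (G q))) del _ _ _ HD
    (fun q => proj1 (Hgrad q)) (fun q => proj1 (proj2 (Hgrad q)))
    (fun q Hq => proj1 (Hentries q Hq)) (fun q Hq => proj1 (proj2 (Hentries q Hq)))
    x a b s r Hx) as I1.
  pose proof (commutator_path_increment_le d p (fun q => snd (F q))
    (fun q => fst (snd (G q))) (fun q => snd (snd (G q))) del _ _ _ HD
    (fun q => proj1 (proj2 (proj2 (Hgrad q)))) (fun q => proj2 (proj2 (proj2 (Hgrad q))))
    (fun q Hq => proj1 (proj2 (proj2 (Hentries q Hq))))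
    (fun q Hq => proj2 (proj2 (proj2 (Hentries q Hq))))
    x a b s r Hx) as I2.
  cbv beta in I1, I2. rewrite HF in I1, I2.
  split; rewrite <- Rabs_Ropp; [eapply Rle_trans, I1 | eapply Rle_trans, I2];
    right; f_equal; ring.
Qed.

Lemma level_set_horizontal_trivial x z :
  vnorm z <= hnorm z ->
  d p x + 5 * (Rabs (h1 z) + Rabs (h2 z)) * K < del ->
  F (Hmul x z) = F x -> z = H0.
Proof.
  intros Hv Hx HF. pose proof (vnorm_le_hnorm_height z Hv) as Hc.
  destruct (horizontal_decomposition z Hv) as [s [r [Ez Hsr]]].
  set (A := G p) in *. set (eta := grad_tolerance A).
  set (a := h1 z) in *. set (b := h2 z) in *. set (M := Rabs a + Rabs b) in *.
  set (L := Rabs a + Rabs b + 2 * (Rabs s + Rabs r)).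
  assert (HM : 0 <= M) by (pose proof (Rabs_pos a); pose proof (Rabs_pos b); unfold M; lra).
  assert (HK : 0 <= K) by (unfold K; pose proof (proj1 (proj1 HD) H0 (expX 1));
                          pose proof (proj1 (proj1 HD) H0 (expY 1)); lra).
  assert (Heta : 0 < eta) by (apply grad_tolerance_pos, Hnd).
  assert (HLK : L * K <= 5 * M * K) by (apply Rmult_le_compat_r; unfold L, M in *; lra).
  assert (HLeta : L * eta <= 5 * M * eta) by (apply Rmult_le_compat_r; unfold L, M in *; lra).
  rewrite Ez in HF. destruct (grad_apply_le_path_length x a b s r ltac:(fold L; lra) HF)
    as [I1 I2]; fold A eta L in I1, I2.
  pose proof (det_mul_l1_le A a b (5 * M * eta) ltac:(lra) ltac:(lra)) as Hdet.
  pose proof (mat_l1_grad_tolerance_lt A Hnd) as Htol. fold eta in Htol. fold M in Hdet.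
  assert (M0 : M = 0).
  { destruct HM as [Mpos|]; [exfalso|congruence].
    pose proof (Rmult_lt_0_compat (Rabs (mat_det A) - 5 * mat_l1 A * eta) M
                  ltac:(lra) Mpos). lra. }
  assert (a0 : a = 0) by (apply Rabs_le_0; unfold M in M0; pose proof (Rabs_pos b); lra).
  assert (b0 : b = 0) by (apply Rabs_le_0; unfold M in M0; pose proof (Rabs_pos a); lra).
  rewrite a0, b0, Rmult_0_l, Rplus_0_l in Hc. apply Rabs_le_0 in Hc.
  rewrite Ez in Hc |- *. unfold h3 in Hc; simpl in Hc. rewrite a0, b0 in *.
  unfold H0. f_equal. lra.
Qed.

End Nondegenerate.

Theorem mainTheorem3 (d : H -> H -> R) (alpha : R) (F : H -> R * R)
  (G : H -> Mat2) (p : H) :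
  homogeneous_distance d ->
  0 < alpha <= 1 ->
  C1alpha_h_with_grad d alpha F G ->
  nondegenerate G p ->
  exists eps1 : R, 0 < eps1 /\
    forall x y : H,
      ball d p eps1 x -> ball d p eps1 y ->
      F x = F y ->
      vnorm (Hmul (Hinv x) y) <= hnorm (Hmul (Hinv x) y) ->
      x = y.
Proof.
  intros HD [Ha _] [Hgrad Hhol] Hnd. pose proof HD as [[Hnn [_ [Hsym Htr]]] _].
  destruct (holder_continuous_at d alpha G p (proj1 HD) Ha Hhol _
              (grad_tolerance_pos _ Hnd)) as [del [Hdel Hclose]].
  destruct (horizontal_le_norm d HD) as [C [HC HhC]].
  set (K := d H0 (expX 1) + d H0 (expY 1)).
  assert (HK : 0 <= K)
    by (pose proof (Hnn H0 (expX 1)) as kX; pose proof (Hnn H0 (expY 1)) as kY; unfold K; lra).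
  set (eps1 := del / (1 + 10 * K * C)).
  assert (Heps1 : eps1 + 10 * K * C * eps1 = del) by (unfold eps1; field; nra).
  exists eps1. split; [apply Rdiv_lt_0_compat; nra|].
  intros x y Hx Hy HF Hv. unfold ball in Hx, Hy.
  set (z := Hmul (Hinv x) y) in Hv.
  assert (Hxz : Hmul x z = y) by (unfold z; destruct x as [[? ?] ?], y as [[? ?] ?]; heis_ring).
  assert (Hz : d H0 z < 2 * eps1).
  { rewrite <- (dist_translate d HD x), Hxz.
    pose proof (Hsym x p) as Hxp. pose proof (Htr x p y) as Hxpy. lra. }
  assert (Hpath : d p x + 5 * (Rabs (h1 z) + Rabs (h2 z)) * K < del).
  { pose proof (Rle_trans _ _ _ (HhC z) (Rmult_le_compat_l _ _ _ HC (Rlt_le _ _ Hz))) as Hh.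
    pose proof (Rmult_le_compat_r _ _ _ HK Hh) as HhK. lra. }
  rewrite <- Hxz, (level_set_horizontal_trivial d F G p del HD Hgrad Hnd Hclose x z Hv Hpath)
    by (rewrite Hxz; symmetry; exact HF).
  destruct x as [[? ?] ?]; heis_ring.
Qed.
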